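(* Let $\mu_4$ be the $4$-fold convolution of the standard middle-third Cantor measure, i.e. the self-similar measure with $d=3$, $m=4$, $(p_0,\dots,p_4)=\tfrac1{16}(1,4,6,4,1)$. Then $$\alpha_4^*:=\sup\left(\Delta\mu_4\setminus\{4\log2/\log3\}\right)=\frac{\log(16/5)}{\log3},$$ and this value is attained as the local dimension of $\mu_4$ at $x=1/2$.
   Context: Given integers $d\ge3$, $m\ge d$ and a probability vector $(p_0,\dots,p_m)$, the associated self-similar measure is the unique compactly supported Borel probability measure $\mu$ with $\mu(A)=\sum_{i=0}^m p_i\,\mu(dA-i)$ for all Borel $A$. The standard Cantor measure is the one with $d=3$, $m=1$, $p_0=p_1=1/2$ (supported on $[0,1/2]$ in this normalization); its $4$-fold convolution is the self-similar measure with $d=3$, $m=4$, $p_i=\binom4i/16$. $\Delta\mu$ is the set of values $\dim\mu(x)=\lim_{r\to0^+}\log\mu(B(x,r))/\log r$ over $x\in\operatorname{supp}\mu$ where this limit exists; for $\mu_4$ the maximal element of $\Delta\mu_4$ is $4\log2/\log3$. *)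

(* R : realType carries its Borel sigma-algebra
   (generated by the intervals ]a,b]), see lebesgue_stieltjes_measure.v. *)
From HB Require Import structures.
From mathcomp Require Import all_boot all_order all_algebra.
From mathcomp Require Import all_classical all_reals all_analysis.
Set Implicit Arguments. Unset Strict Implicit. Unset Printing Implicit Defensive.
Import Order.TTheory GRing.Theory Num.Theory.
Import numFieldNormedType.Exports.
Local Open Scope classical_set_scope.
Local Open Scope ring_scope.

Definition self_similar_measure {R : realType} (d m : nat) (p : nat -> R)
    (mu : {measure set R -> \bar R}) : Prop :=
  [/\ mu setT = 1%E,
      (exists K : set R, compact K /\ mu (~` K) = 0%E) &
      forall A : set R, measurable A ->
        mu A = (\sum_(0 <= i < m.+1) (p i)%:E * mu [set (d%:R * a - i%:R)%R | a in A])%E].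

Definition msupp {R : realType} (mu : {measure set R -> \bar R}) : set R :=
  [set x | forall r : R, 0 < r -> (0 < mu (ball x r))%E].

Definition has_locdim {R : realType} (mu : {measure set R -> \bar R}) (x l : R)
  : Prop :=
  (fun r : R => ln (fine (mu (ball x r))) / ln r) @ (0:R)^'+ --> l.

Definition locdim_set {R : realType} (mu : {measure set R -> \bar R}) : set R :=
  [set l | exists2 x, msupp mu x & has_locdim mu x l].

(* Rescaling by 3 turns the self-similarity into a recursion on the masses of
   the triadic intervals [j/3^n, (j+1)/3^n[.  As mu lives on [0, 2], an
   interval of level n+1 only receives mass from the two level-n intervals k
   and 3^n + k occupying the same relative position in [0, 1[ and [1, 2[, with
   consecutive weights of (1, 4, 6, 4, 1)/16.  Hence the mass of such a pair
   shrinks at least by the factor 5/16 per level, with equality along the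
   ternary digit 1, i.e. around 1/2 = 0.111..._3.  Consequently an interior
   point x sees masses at least (1/16)^m (5/16)^n on balls of radius
   3^-(m+n), for some m depending on x, while the endpoints 0 and 2 see masses
   of exact order 16^-n.  Taking logarithms gives local dimension
   log(16/5)/log 3 at 1/2, at most that value at every other point of ]0, 2[,
   and 4 log 2/log 3 at the endpoints. *)

From HB Require Import structures.
From mathcomp Require Import all_boot all_order all_algebra.
From mathcomp Require Import all_classical all_reals all_analysis.
From mathcomp Require Import lra ring zify.
Import Order.TTheory GRing.Theory Num.Theory.
Import numFieldNormedType.Exports.
Local Open Scope classical_set_scope.
Local Open Scope ring_scope.

(** * Triadic scales *)

Section TriadicScales.
Context {R : realType}.

Definition tlen (n : nat) : R := (3 ^+ n)^-1.

Lemma tlen_gt0 n : 0 < tlen n.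
Proof. by rewrite invr_gt0 exprn_gt0. Qed.

Lemma tlenS n : tlen n.+1 = tlen n / 3.
Proof. by rewrite /tlen exprS invfM mulrC. Qed.

Lemma tlenK n : 3 ^+ n * tlen n = 1.
Proof. by rewrite mulfV // gt_eqF // exprn_gt0. Qed.

Lemma ln_tlen n : ln (tlen n) = - (n%:R * ln 3).
Proof. by rewrite lnV ?posrE ?exprn_gt0 // lnXn // mulr_natl. Qed.

Lemma tlen_cvg0 : tlen n @[n --> \oo] --> 0.
Proof.
have -> : tlen = (fun n => (3^-1) ^+ n) by apply: funext => n; rewrite /tlen exprVn.
by apply: cvg_expr; rewrite ger0_norm ?invr_ge0 // invf_lt1 //; lra.
Qed.

Lemma exists_pow3_gt (M t : R) : 0 < t -> exists n : nat, M < 3 ^+ n * t.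
Proof.
move=> t0; have /andP[_ lt_trunc] := truncn_itv (divr_ge0 (normr_ge0 M) (ltW t0)).
set k := Num.truncn _ in lt_trunc; exists k.+1.
have k_le : k.+1%:R <= 3 ^+ k.+1 :> R by rewrite -natrX ler_nat ltnW // ltn_expl.
have : `|M| / t * t < 3 ^+ k.+1 * t by rewrite ltr_pM2r //; exact: lt_le_trans k_le.
by rewrite divfK ?gt_eqF //; have := ler_norm M; lra.
Qed.

Lemma tlen_bracket (r : R) : 0 < r < 1 / 2 ->
  exists n, tlen n.+1 / 2 < r <= tlen n / 2.
Proof.
move=> /andP[r0 r_lt].
have [N hN] := exists_pow3_gt 1 (2 * r) ltac:(lra).
have small_N : ~~ (r <= tlen N / 2).
  have pow_gt0 : 0 < 3 ^+ N :> R by apply: exprn_gt0.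
  rewrite -ltNge ltr_pdivrMr // -(ltr_pM2l pow_gt0) mulfV ?gt_eqF //; lra.
elim: N small_N {hN} => [|N IH]; rewrite -ltNge => lt_r.
  by move: lt_r; rewrite /tlen expr0 invr1; lra.
case: (boolP (r <= tlen N / 2)) => [rN|/IH //]; exists N.
by rewrite rN andbT.
Qed.

Lemma ln_tlen_bracket n r : tlen n.+1 / 2 < r <= tlen n / 2 ->
  `|ln r + n%:R * ln 3| <= ln 3 + ln 2.
Proof.
move=> /andP[lo hi]; have r0 : 0 < r by apply: lt_trans lo; rewrite divr_gt0 ?tlen_gt0.
have ln_scale k : ln (tlen k / 2) = - (k%:R * ln 3) - ln 2.
  by rewrite lnM ?posrE ?tlen_gt0 // ln_tlen lnV ?posrE.
have ln3_gt0 : 0 < ln (3 : R) by apply: ln_gt0; lra.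
have ln2_gt0 : 0 < ln (2 : R) by apply: ln_gt0; lra.
have : ln (tlen n.+1 / 2) < ln r by rewrite ltr_ln ?posrE ?divr_gt0 ?tlen_gt0.
have : ln r <= ln (tlen n / 2) by rewrite ler_ln ?posrE ?divr_gt0 ?tlen_gt0.
rewrite !ln_scale -natr1 ler_norml => *; apply/andP; split; lra.
Qed.

Lemma le0_of_dilation_mono (g : R -> R) M :
  (forall t, 0 <= t -> g t <= g (3 * t)) -> (forall t, M < t -> g t <= 0) ->
  forall t, 0 < t -> g t <= 0.
Proof.
move=> g_mono g_far t t0; have [n Mn] := exists_pow3_gt M t t0.
apply: le_trans (g_far _ Mn); elim: n {Mn} => [|n IH]; first by rewrite expr0 mul1r.
apply: le_trans IH _; rewrite exprS -mulrA; apply: g_mono.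
by rewrite mulr_ge0 ?exprn_ge0 // ltW.
Qed.

Lemma ln16E : ln (16 : R) = 4 * ln 2.
Proof.
have -> : 16 = 2 ^+ 4 :> R by rewrite !exprS expr0; lra.
by rewrite lnXn // -mulr_natl; lra.
Qed.

End TriadicScales.

(** * Local dimension from bounds on masses of balls *)

Section LocalDimensionCriteria.
Context {R : realType}.

Let ln3_gt0 : 0 < ln (3 : R). Proof. by apply: ln_gt0; lra. Qed.

Lemma le_lim_harmonic (a : nat -> R) (l b K : R) N :
  a n @[n --> \oo] --> l -> (forall n, (N <= n)%N -> a n <= b - K * harmonic n) ->
  l <= b.
Proof.
move=> a_cvg a_le.
have b_cvg : (fun n => b - K * harmonic n) n @[n --> \oo] --> b.
  rewrite -[X in _ --> X]subr0 -(mulr0 K).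
  exact: cvgB (cvg_cst _) (cvgM (cvg_cst _) cvg_harmonic).
rewrite -(cvg_lim _ a_cvg) // -(cvg_lim _ b_cvg) //.
apply: ler_lim; [exact: cvgP a_cvg | exact: cvgP b_cvg |].
by exists N => // n /a_le.
Qed.

Lemma ge_lim_harmonic (a : nat -> R) (l b K : R) N :
  a n @[n --> \oo] --> l -> (forall n, (N <= n)%N -> b - K * harmonic n <= a n) ->
  b <= l.
Proof.
move=> a_cvg a_ge; rewrite -[l]opprK lerNr.
apply: (le_lim_harmonic (fun n => - a n) _ _ (- K) N); first exact: cvgN.
by move=> n /a_ge; lra.
Qed.

Lemma ln_geom_ratio (c be : R) n :
  (ln c + n.+1%:R * ln be) / ln (tlen n.+1) =
  - ln be / ln 3 - ln c / ln 3 * harmonic n.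
Proof.
have n_gt0 : 0 < n.+1%:R :> R by [].
by rewrite ln_tlen /=; field; rewrite !gt_eqF.
Qed.

Lemma locdim_seq (mu : {measure set R -> \bar R}) x l : has_locdim mu x l ->
  ln (fine (mu (ball x (tlen n.+1)))) / ln (tlen n.+1) @[n --> \oo] --> l.
Proof.
move=> /cvg_at_rightP; apply; split => [n|]; first exact: tlen_gt0.
by rewrite (cvg_shiftS tlen); exact: tlen_cvg0.
Qed.

Lemma ln_geom (c be : R) n : 0 < c -> 0 < be ->
  ln (c * be ^+ n) = ln c + n%:R * ln be.
Proof. by move=> c0 be0; rewrite lnM ?posrE ?exprn_gt0 // lnXn // mulr_natl. Qed.

Section Measure.
Variable mu : {measure set R -> \bar R}.

Lemma has_locdim_le x l c be N : 0 < c -> 0 < be -> has_locdim mu x l ->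
  (forall n, (N <= n)%N -> c * be ^+ n <= fine (mu (ball x (tlen n)))) ->
  l <= - ln be / ln 3.
Proof.
move=> c0 be0 /locdim_seq l_cvg mass_ge.
apply: (le_lim_harmonic _ _ _ (ln c / ln 3) N l_cvg) => n Nn.
have geom_gt0 : 0 < c * be ^+ n.+1 by rewrite mulr_gt0 // exprn_gt0.
have ln_le : ln c + n.+1%:R * ln be <= ln (fine (mu (ball x (tlen n.+1)))).
  rewrite -ln_geom // ler_ln ?posrE //; last exact: lt_le_trans (mass_ge _ (leqW Nn)).
  exact: mass_ge (leqW Nn).
rewrite -ln_geom_ratio ler_wnM2r // invr_le0 ln_tlen oppr_le0.
by rewrite mulr_ge0 // ltW.
Qed.

Lemma has_locdim_ge x l C be N : 0 < C -> 0 < be -> has_locdim mu x l ->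
  (forall n, (N <= n)%N -> 0 < fine (mu (ball x (tlen n))) <= C * be ^+ n) ->
  - ln be / ln 3 <= l.
Proof.
move=> C0 be0 /locdim_seq l_cvg mass_le.
apply: (ge_lim_harmonic _ _ _ (ln C / ln 3) N l_cvg) => n Nn.
have /andP[m_gt0 m_le] := mass_le _ (leqW Nn).
have ln_le : ln (fine (mu (ball x (tlen n.+1)))) <= ln C + n.+1%:R * ln be.
  by rewrite -ln_geom // ler_ln ?posrE // mulr_gt0 // exprn_gt0.
rewrite -ln_geom_ratio ler_wnM2r // invr_le0 ln_tlen oppr_le0.
by rewrite mulr_ge0 // ltW.
Qed.

Lemma cvg_ln_ratio (g : R -> R) al K d : 0 < d ->
  (forall r, 0 < r < d -> `|g r - al * ln r| <= K) ->
  g r / ln r @[r --> 0^'+] --> al.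
Proof.
move=> d0 g_near; apply/cvgrPdist_lt => e e0.
near=> r.
have r0 : 0 < r by near: r; exact: nbhs_right_gt.
have rd : r < d by near: r; exact: nbhs_right_lt.
have r1 : r < 1 by near: r; apply: nbhs_right_lt; lra.
have rE : r < expR (- (K + 1) / e) by near: r; apply: nbhs_right_lt; exact: expR_gt0.
have lnr_lt : ln r < - (K + 1) / e by rewrite -[X in _ < X]expRK ltr_ln ?posrE ?expR_gt0.
have lnr_lt0 : ln r < 0 by rewrite ln_lt0 // r0 r1.
have lnr_gt0 : 0 < - ln r by lra.
have g_r : `|g r - al * ln r| <= K by apply: g_near; rewrite r0 rd.
have -> : al - g r / ln r = (g r - al * ln r) / (- ln r) by field; rewrite ltr0_neq0.
rewrite normrM normfV (gtr0_norm lnr_gt0) ltr_pdivrMr //.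
have : (K + 1) / e < - ln r by lra.
by rewrite -(ltr_pM2r e0) divfK ?gt_eqF //; lra.
Unshelve. all: by end_near.
Qed.

Lemma has_locdim_of_sandwich x be c C : 0 < be -> 0 < c -> 0 < C ->
  (forall n r, tlen n.+1 / 2 < r <= tlen n / 2 ->
     c * be ^+ n <= fine (mu (ball x r)) <= C * be ^+ n) ->
  has_locdim mu x (- ln be / ln 3).
Proof.
move=> be0 c0 C0 mass_sandwich; set al := - ln be / ln 3.
apply: (cvg_ln_ratio _ al (`|ln c| + `|ln C| + `|al| * (ln 3 + ln 2)) (1 / 2))
  => [|r /tlen_bracket [n r_n]]; first lra. set m := fine (mu (ball x r)).
have /andP[m_lo m_hi] := mass_sandwich n r r_n.
have lo_gt0 : 0 < c * be ^+ n by rewrite mulr_gt0 // exprn_gt0.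
have ln_m : `|ln m - n%:R * ln be| <= `|ln c| + `|ln C|.
  have : ln (c * be ^+ n) <= ln m by rewrite ler_ln ?posrE //; exact: lt_le_trans m_lo.
  have : ln m <= ln (C * be ^+ n).
    by rewrite ler_ln ?posrE ?mulr_gt0 ?exprn_gt0 //; exact: lt_le_trans m_lo.
  have := ler_norm (ln c); have := ler_norm (- ln c); have := ler_norm (ln C).
  have := ler_norm (- ln C); rewrite !normrN !ln_geom // ler_norml => *.
  apply/andP; split; lra.
have -> : ln m - al * ln r = (ln m - n%:R * ln be) - al * (ln r + n%:R * ln 3).
  by rewrite /al; field; rewrite gt_eqF.
rewrite (le_trans (ler_normB _ _)) // normrM.
apply: lerD ln_m _; apply: ler_wpM2l; [exact: normr_ge0 | exact: ln_tlen_bracket].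
Qed.
End Measure.

End LocalDimensionCriteria.

(** * The fourfold convolution of the Cantor measure *)

Section ConvolvedCantorMeasure.
Context {R : realType} (mu : {measure set R -> \bar R}).
Hypothesis mu_ss : self_similar_measure 3 4 (fun i => ('C(4, i))%:R / 16) mu.

Definition expand (i : nat) (A : set R) : set R := [set 3 * a - i%:R | a in A].

Lemma mu_le1 A : measurable A -> (mu A <= 1)%E.
Proof. by case: mu_ss => <- _ _ mA; apply: le_measure; rewrite ?inE. Qed.

Lemma fin_num_mu A : measurable A -> mu A \is a fin_num.
Proof.
by move=> mA; rewrite ge0_fin_numE ?measure_ge0 // (le_lt_trans (mu_le1 _ mA)) ?ltry.
Qed.

Lemma fine_muK A : measurable A -> (fine (mu A))%:E = mu A.
Proof. by move=> /fin_num_mu /fineK. Qed.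

Lemma fine_mu_ge0 A : 0 <= fine (mu A).
Proof. exact/fine_ge0/measure_ge0. Qed.

Lemma fine_mu_le A B : measurable A -> measurable B -> A `<=` B ->
  fine (mu A) <= fine (mu B).
Proof.
move=> mA mB AB; rewrite -lee_fin !fine_muK //.
by apply: le_measure; rewrite ?inE.
Qed.

Lemma fine_mu_le_setU A B C : measurable A -> measurable B -> measurable C ->
  A `<=` B `|` C -> fine (mu A) <= fine (mu B) + fine (mu C).
Proof.
move=> mA mB mC ABC; rewrite -lee_fin EFinD !fine_muK //.
apply: le_trans (measureU2 _ mB mC).
by apply: le_measure; rewrite ?inE //; exact: measurableU.
Qed.

Lemma fine_mu_selfsim A : measurable A -> (forall i, measurable (expand i A)) ->
  fine (mu A) = fine (mu (expand 0 A)) / 16 + fine (mu (expand 1 A)) * 4 / 16 +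
    fine (mu (expand 2 A)) * 6 / 16 + fine (mu (expand 3 A)) * 4 / 16 +
    fine (mu (expand 4 A)) / 16.
Proof.
move=> mA mT; case: mu_ss => _ _ /(_ A mA) ->.
rewrite !big_nat_recr //= big_geq //.
rewrite -[mu (expand 0 A)]fine_muK // -[mu (expand 1 A)]fine_muK //.
rewrite -[mu (expand 2 A)]fine_muK // -[mu (expand 3 A)]fine_muK //.
rewrite -[mu (expand 4 A)]fine_muK // -!EFinM /=.
by rewrite bin0 bin1 binn (_ : 'C(4, 2) = 6%N) // (_ : 'C(4, 3) = 4%N) //; lra.
Qed.

Lemma fine_mu_selfsim_le A v : measurable A -> (forall i, measurable (expand i A)) ->
  (forall i, (i <= 4)%N -> fine (mu (expand i A)) <= v) -> fine (mu A) <= v.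
Proof.
move=> mA mT le_v; rewrite fine_mu_selfsim //.
by have := le_v 0%N isT; have := le_v 1%N isT; have := le_v 2%N isT;
  have := le_v 3%N isT; have := le_v 4%N isT; lra.
Qed.

Lemma expandE i A : expand i A = [set y | A ((y + i%:R) / 3)].
Proof.
apply/seteqP; split => [_ [a Aa <-] | y Ay] /=.
  by rewrite (_ : _ / 3 = a) //; field.
by exists ((y + i%:R) / 3) => //; field.
Qed.

Lemma expand_itv_co i (c d : R) :
  expand i `[c, d[ = `[3 * c - i%:R, 3 * d - i%:R[%classic.
Proof.
by rewrite expandE; apply/seteqP; split => y /=; rewrite !in_itv /= => /andP[? ?];
  apply/andP; split; lra.
Qed.

Lemma expand_itv_cy i (c : R) : expand i `[c, +oo[ = `[3 * c - i%:R, +oo[%classic.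
Proof.
by rewrite expandE; apply/seteqP; split => y /=; rewrite !in_itv /= !andbT; lra.
Qed.

Lemma expand_itv_yc i (c : R) : expand i `]-oo, c] = `]-oo, 3 * c - i%:R]%classic.
Proof. by rewrite expandE; apply/seteqP; split => y /=; rewrite !in_itv /=; lra. Qed.

Lemma mu_far_eq0 : exists M : R, forall A : set R, measurable A ->
  (forall x, A x -> M < `|x|) -> mu A = 0%E.
Proof.
case: mu_ss => _ [K [cK muK0]] _; have [M [_ M_bnd]] := compact_bounded cK.
exists (`|M| + 1) => A mA A_far.
have mK : measurable (~` K).
  apply: measurableC; apply: measurable_realfun.closed_measurable.
  by apply: compact_closed.
apply/eqP; rewrite eq_le measure_ge0 andbT -muK0; apply: le_measure; rewrite ?inE //.
move=> x Ax Kx; have M_lt : M < `|M| + 1 by have := ler_norm M; lra.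
by have := M_bnd _ M_lt x Kx; have := A_far x Ax => /=; lra.
Qed.

Lemma mu_itv_ge2 : mu `[2, +oo[%classic = 0%E.
Proof.
have [M M_far] := mu_far_eq0.
have mI (c : R) : measurable `[c, +oo[%classic by exact: measurable_itv.
have mT c i : measurable (expand i `[c, +oo[%classic) by rewrite expand_itv_cy.
have tail_le0 : forall t, 0 < t -> fine (mu `[2 + t, +oo[%classic) <= 0.
  apply: (le0_of_dilation_mono _ M) => t t0.
    apply: fine_mu_selfsim_le => // i i4; rewrite expand_itv_cy.
    apply: fine_mu_le => // x /=; rewrite !in_itv /= !andbT.
    have : i%:R <= 4 :> R by rewrite (ler_nat R i 4).
    lra.
  rewrite (M_far `[2 + t, +oo[%classic) // => x /=; rewrite in_itv /= andbT => xt.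
  by have := ler_norm x; lra.
have low_eq0 i : (i <= 3)%N -> fine (mu (expand i `[2, +oo[%classic)) = 0.
  move=> i3; apply/eqP; rewrite eq_le fine_mu_ge0 andbT.
  apply: le_trans (tail_le0 1 ltr01); rewrite expand_itv_cy.
  apply: fine_mu_le => // x /=; rewrite !in_itv /= !andbT.
  have : i%:R <= 3 :> R by rewrite (ler_nat R i 3).
  lra.
rewrite -fine_muK //; congr (_%:E); have := fine_mu_selfsim _ (mI 2) (mT 2).
rewrite !(low_eq0 0%N, low_eq0 1%N, low_eq0 2%N, low_eq0 3%N) //.
rewrite expand_itv_cy (_ : 3 * 2 - 4%:R = 2 :> R).
  by have := fine_mu_ge0 `[2, +oo[%classic; lra.
lra.
Qed.

Lemma mu_itv_le0 : mu `]-oo, 0]%classic = 0%E.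
Proof.
have [M M_far] := mu_far_eq0.
have mI (c : R) : measurable `]-oo, c]%classic by exact: measurable_itv.
have mT c i : measurable (expand i `]-oo, c]%classic) by rewrite expand_itv_yc.
have tail_le0 : forall t, 0 < t -> fine (mu `]-oo, - t]%classic) <= 0.
  apply: (le0_of_dilation_mono _ M) => t t0.
    apply: fine_mu_selfsim_le => // i _; rewrite expand_itv_yc.
    by apply: fine_mu_le => // x /=; rewrite !in_itv /=; have := ler0n R i; lra.
  rewrite (M_far `]-oo, - t]%classic) // => x /=; rewrite in_itv /= => xt.
  by have := ler_norm (- x); rewrite normrN; lra.
have low_eq0 i : (1 <= i)%N -> fine (mu (expand i `]-oo, 0]%classic)) = 0.
  move=> i1; apply/eqP; rewrite eq_le fine_mu_ge0 andbT.
  apply: le_trans (tail_le0 1 ltr01); rewrite expand_itv_yc.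
  apply: fine_mu_le => // x /=; rewrite !in_itv /=.
  have : 1 <= i%:R :> R by rewrite (ler_nat R 1 i).
  lra.
rewrite -fine_muK //; congr (_%:E); have := fine_mu_selfsim _ (mI 0) (mT 0).
rewrite !(low_eq0 1%N, low_eq0 2%N, low_eq0 3%N, low_eq0 4%N) //.
rewrite expand_itv_yc (_ : 3 * 0 - 0%:R = 0 :> R).
  by have := fine_mu_ge0 `]-oo, 0]%classic; lra.
lra.
Qed.

Lemma msupp_itv x : msupp mu x -> 0 <= x <= 2.
Proof.
move=> x_supp; have mball r : measurable (ball x r) by rewrite ball_itv.
rewrite !leNgt; apply/andP; split; apply/negP => x_out.
- have := x_supp (- x); rewrite oppr_gt0 => /(_ x_out); rewrite -mu_itv_le0.
  apply/negP; rewrite -leNgt; apply: le_measure; rewrite ?inE //.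
  by move=> y; rewrite ball_itv /= !in_itv /=; lra.
- have := x_supp (x - 2); rewrite subr_gt0 => /(_ x_out); rewrite -mu_itv_ge2.
  apply/negP; rewrite -leNgt; apply: le_measure; rewrite ?inE //.
  by move=> y; rewrite ball_itv /= !in_itv /= andbT; lra.
Qed.

Lemma fine_mu_itv02 : fine (mu `[0, 2[%classic) = 1.
Proof.
have m_itv (b0 b1 : itv_bound R) : measurable [set` Interval b0 b1].
  exact: measurable_itv.
have mU : measurable (`[0, 2[%classic `|` `[2, +oo[%classic : set R).
  exact: measurableU.
have cover : [set: R] `<=`
    `]-oo, 0]%classic `|` (`[0, 2[%classic `|` `[2, +oo[%classic).
  move=> y _ /=; rewrite !in_itv /= andbT.
  case: (lerP y 0) => y0; [by left | right].
  by case: (ltrP y 2) => y2; [left; rewrite (ltW y0) | right].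
apply/eqP; rewrite eq_le -lee_fin fine_muK // mu_le1 //=.
have := fine_mu_le_setU [set: R] `]-oo, 0]%classic
  (`[0, 2[%classic `|` `[2, +oo[%classic) measurableT (m_itv _ _) mU cover.
have := fine_mu_le_setU _ `[0, 2[%classic `[2, +oo[%classic mU (m_itv _ _) (m_itv _ _)
  (@subset_refl _ _).
rewrite mu_itv_le0 mu_itv_ge2 /= addr0 add0r => le_MG.
by case: mu_ss => -> _ _ /= /le_trans; apply.
Qed.

Definition tri n (j : int) : set R := `[j%:~R * tlen n, (j + 1)%:~R * tlen n[.

Definition tmass n j := fine (mu (tri n j)).

Lemma measurable_tri n j : measurable (tri n j).
Proof. exact: measurable_itv. Qed.

Lemma expand_tri i n j : expand i (tri n.+1 j) = tri n (j - (i * 3 ^ n)%N%:Z).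
Proof.
have shift k : 3 * (k%:~R * tlen n.+1) - i%:R = (k - (i * 3 ^ n)%N%:Z)%:~R * tlen n.
  rewrite tlenS intrB -pmulrn natrM natrX mulrBl -mulrA tlenK.
  by rewrite mulr1; field.
by rewrite expand_itv_co !shift addrAC.
Qed.

Lemma tmassS n j : tmass n.+1 j =
  tmass n (j - (0 * 3 ^ n)%N%:Z) / 16 + tmass n (j - (1 * 3 ^ n)%N%:Z) * 4 / 16 +
  tmass n (j - (2 * 3 ^ n)%N%:Z) * 6 / 16 + tmass n (j - (3 * 3 ^ n)%N%:Z) * 4 / 16 +
  tmass n (j - (4 * 3 ^ n)%N%:Z) / 16.
Proof.
rewrite /tmass fine_mu_selfsim ?expand_tri //; first exact: measurable_tri.
by move=> i; rewrite expand_tri; exact: measurable_tri.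
Qed.

Lemma tmass_ge0 n j : 0 <= tmass n j.
Proof. exact: fine_mu_ge0. Qed.

Lemma tmass_out n (j : int) : (j < 0)%R \/ ((2 * 3 ^ n)%N%:Z <= j)%R -> tmass n j = 0.
Proof.
move=> j_out; apply/eqP; rewrite eq_le tmass_ge0 andbT.
have t0 : 0 < tlen n :> R := tlen_gt0 n.
case: j_out => [j_lt0|j_ge].
- rewrite -[0]/(fine 0%E) -mu_itv_le0; apply: fine_mu_le => //.
    exact: measurable_tri.
  move=> y /=; rewrite !in_itv /= => /andP[_ y_lt]; apply/ltW/(lt_le_trans y_lt).
  rewrite pmulr_lle0 ?tlen_gt0 //.
  have : (j + 1)%:~R <= (0 : int)%:~R :> R by rewrite ler_int; lia.
  by rewrite mulr0z.
- rewrite -[0]/(fine 0%E) -mu_itv_ge2; apply: fine_mu_le => //.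
    exact: measurable_tri.
  have j_ge2 : 2 <= j%:~R * tlen n :> R.
    have : (2 * 3 ^ n)%N%:~R <= j%:~R :> R by rewrite ler_int.
    rewrite -pmulrn natrM natrX => /(ler_wpM2r (ltW t0)).
    by rewrite -mulrA tlenK mulr1.
  move=> y /=; rewrite !in_itv /= andbT => /andP[y_ge _].
  by apply: le_trans j_ge2 _; rewrite bnd_simp in y_ge.
Qed.

Ltac drop_out_of_range :=
  repeat match goal with |- context [tmass ?n (Posz ?a - Posz ?b)] =>
    rewrite (tmass_out n (Posz a - Posz b)); [|lia] end.

Section Blocks.
Variables (n k : nat).
Hypothesis k_lt : (k < 3 ^ n)%N.

Local Ltac tmassS_block :=
  rewrite tmassS; drop_out_of_range;
  repeat match goal with |- context [tmass n (Posz ?a - Posz ?b)] =>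
    first [ rewrite (_ : Posz a - Posz b = Posz k); [|lia]
          | rewrite (_ : Posz a - Posz b = Posz (3 ^ n + k)); [|lia] ] end;
  lra.

Lemma tmassS0 : tmass n.+1 k = tmass n k / 16.
Proof. tmassS_block. Qed.

Lemma tmassS1 :
  tmass n.+1 (3 ^ n + k)%N = (4 * tmass n k + tmass n (3 ^ n + k)%N) / 16.
Proof. tmassS_block. Qed.

Lemma tmassS2 :
  tmass n.+1 (2 * 3 ^ n + k)%N = (6 * tmass n k + 4 * tmass n (3 ^ n + k)%N) / 16.
Proof. tmassS_block. Qed.

Lemma tmassS3 :
  tmass n.+1 (3 * 3 ^ n + k)%N = (4 * tmass n k + 6 * tmass n (3 ^ n + k)%N) / 16.
Proof. tmassS_block. Qed.

Lemma tmassS4 :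
  tmass n.+1 (4 * 3 ^ n + k)%N = (tmass n k + 4 * tmass n (3 ^ n + k)%N) / 16.
Proof. tmassS_block. Qed.

Lemma tmassS5 : tmass n.+1 (5 * 3 ^ n + k)%N = tmass n (3 ^ n + k)%N / 16.
Proof. tmassS_block. Qed.

End Blocks.

(* The level-n intervals k and 3^n + k sit at the same relative position in
   [0, 1[ and [1, 2[; by tmassS0 - tmassS5 they are the only ones feeding the
   level-(n+1) intervals at that position. *)
Definition tmass_pair n (k : nat) := tmass n k + tmass n (3 ^ n + k)%N.

Lemma tmass_pair0 : tmass_pair 0 0 = 1.
Proof.
have tri0 (j : nat) : tri 0 j = `[j%:R, j.+1%:R[%classic.
  by rewrite /tri /tlen expr0 invr1 !mulr1 intrD -!pmulrn natr1.
have tri_disj : tri 0 0%Z `&` tri 0 1%Z = set0.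
  rewrite !tri0; apply/seteqP; split => y //= [].
  by rewrite !in_itv /= => /andP[? ?] /andP[? ?]; lra.
have tri_cover : tri 0 0%Z `|` tri 0 1%Z = `[0, 2[%classic.
  rewrite !tri0; apply/seteqP; split => y /=; rewrite !in_itv /=.
    by case=> /andP[]; lra.
  by case: (ltrP y 1) => y1 /andP[y0 y2]; [left | right]; apply/andP; split.
have m00 := measurable_tri 0 0%Z; have m01 := measurable_tri 0 1%Z.
rewrite /tmass_pair /tmass expn0 addn0 -fine_mu_itv02 -tri_cover measureU //.
by rewrite fineD ?fin_num_mu.
Qed.

Lemma tmassS_ge_pair n e k : (0 < e < 5)%N -> (k < 3 ^ n)%N ->
  tmass_pair n k / 16 <= tmass n.+1 (e * 3 ^ n + k)%N.
Proof.
move=> /andP[e_gt0 e_lt5] k_lt; rewrite /tmass_pair.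
have := tmass_ge0 n k; have := tmass_ge0 n (3 ^ n + k)%N.
case: e e_gt0 e_lt5 => [|[|[|[|[|e]]]]] //= _ _.
- by rewrite mul1n tmassS1 //; lra.
- by rewrite tmassS2 //; lra.
- by rewrite tmassS3 //; lra.
- by rewrite tmassS4 //; lra.
Qed.

Lemma tmass_pairS_ge n d k : (d < 3)%N -> (k < 3 ^ n)%N ->
  5 / 16 * tmass_pair n k <= tmass_pair n.+1 (d * 3 ^ n + k).
Proof.
move=> d_lt k_lt; rewrite /tmass_pair.
have -> : (3 ^ n.+1 + (d * 3 ^ n + k) = (3 + d) * 3 ^ n + k)%N.
  by rewrite expnS mulnDl addnA.
have := tmass_ge0 n k; have := tmass_ge0 n (3 ^ n + k)%N.
case: d d_lt => [|[|[|d]]] //= _.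
- by rewrite mul0n add0n tmassS0 // tmassS3 //; lra.
- by rewrite mul1n tmassS1 // tmassS4 //; lra.
- by rewrite tmassS2 // tmassS5 //; lra.
Qed.

Lemma tmass_pair_ge n k : (k < 3 ^ n)%N -> (5 / 16) ^+ n <= tmass_pair n k.
Proof.
elim: n k => [|n IH] k k_lt.
  by move: k_lt; rewrite expn0 ltnS leqn0 => /eqP ->; rewrite tmass_pair0 expr0.
have pow_gt0 : (0 < 3 ^ n)%N by rewrite expn_gt0.
have d_lt : (k %/ 3 ^ n < 3)%N by rewrite ltn_divLR //; rewrite expnS in k_lt; lia.
have r_lt : (k %% 3 ^ n < 3 ^ n)%N by rewrite ltn_mod.
rewrite (divn_eq k (3 ^ n)) exprS; apply: le_trans (tmass_pairS_ge _ _ _ d_lt r_lt).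
by rewrite ler_wpM2l ?IH //; lra.
Qed.

Lemma geom_interior_le m t :
  (1 / 16) ^+ m.+1 * (5 / 16) ^+ t <= (5 / 16) ^+ (m + t) / 16 :> R.
Proof.
have le_m : (1 / 16) ^+ m <= (5 / 16) ^+ m :> R by rewrite lerXn2r ?nnegrE //; lra.
have := ler_wpM2r (exprn_ge0 t (_ : 0 <= 5 / 16 :> R)) le_m.
by rewrite exprS exprD; lra.
Qed.

Lemma tmass_ge_interior_lo m t k : (3 ^ t <= k < 3 ^ (m + t))%N ->
  (1 / 16) ^+ m * (5 / 16) ^+ t <= tmass (m + t) k.
Proof.
elim: m k => [|m IH] k; first by rewrite add0n; lia.
rewrite addSn => /andP[k_ge k_lt]; set n := (m + t)%N in IH k_lt *.
have le_geom := geom_interior_le m t.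
have pow_gt0 : (0 < 3 ^ n)%N by rewrite expn_gt0.
case: (ltnP k (3 ^ n)) => [k_small|k_big].
  have := IH k (introT andP (conj k_ge k_small)).
  by rewrite tmassS0 // exprS; lra.
have d_gt0 : (0 < k %/ 3 ^ n < 5)%N.
  by rewrite divn_gt0 // k_big /= ltn_divLR //; rewrite expnS in k_lt; lia.
have r_lt : (k %% 3 ^ n < 3 ^ n)%N by rewrite ltn_mod.
rewrite (divn_eq k (3 ^ n)); apply: le_trans (tmassS_ge_pair _ _ _ d_gt0 r_lt).
by apply: le_trans le_geom _; rewrite ler_pM2r // tmass_pair_ge.
Qed.

Lemma tmass_ge_interior_hi m t k : (k + 3 ^ t < 3 ^ (m + t))%N ->
  (1 / 16) ^+ m * (5 / 16) ^+ t <= tmass (m + t) (3 ^ (m + t) + k)%N.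
Proof.
elim: m k => [|m IH] k; first by rewrite add0n; lia.
rewrite addSn => k_lt; set n := (m + t)%N in IH k_lt *.
have le_geom := geom_interior_le m t.
have pow_gt0 : (0 < 3 ^ n)%N by rewrite expn_gt0.
have r_lt : (k %% 3 ^ n < 3 ^ n)%N by rewrite ltn_mod.
have -> : (3 ^ n.+1 + k = (3 + k %/ 3 ^ n) * 3 ^ n + k %% 3 ^ n)%N.
  by rewrite expnS mulnDl -addnA -divn_eq.
case: (ltnP k (2 * 3 ^ n)) => [k_low|k_high].
  have d_lt : (k %/ 3 ^ n < 2)%N by rewrite ltn_divLR.
  have e_lt : (0 < 3 + k %/ 3 ^ n < 5)%N by move: (k %/ 3 ^ n)%N d_lt => d; lia.
  apply: le_trans (tmassS_ge_pair _ _ _ e_lt r_lt).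
  by apply: le_trans le_geom _; rewrite ler_pM2r // tmass_pair_ge.
have d2 : (k %/ 3 ^ n = 2)%N.
  apply/eqP; rewrite eqn_leq -ltnS ltn_divLR // leq_divRL //.
  by rewrite expnS in k_lt; lia.
have r_small : (k %% 3 ^ n + 3 ^ t < 3 ^ n)%N.
  by rewrite {1}(divn_eq k (3 ^ n)) d2 in k_lt; rewrite expnS in k_lt; lia.
rewrite d2 tmassS5 // exprS; have := IH _ r_small; lra.
Qed.

(* The level-n interval centred at 1/2 = 0.111..._3. *)
Fixpoint mid n : nat := if n is n'.+1 then (3 ^ n' + mid n')%N else 0%N.

Lemma mid_eq n : (2 * mid n + 1 = 3 ^ n)%N.
Proof. by elim: n => [|n IH] //=; rewrite expnS; lia. Qed.

Lemma mid_lt n : (mid n < 3 ^ n)%N.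
Proof. by have := mid_eq n; lia. Qed.

Lemma tmass_pair_mid n : tmass_pair n (mid n) = (5 / 16) ^+ n.
Proof.
elim: n => [|n IH]; first by rewrite tmass_pair0.
rewrite /tmass_pair /= (_ : (3 ^ n.+1 + (3 ^ n + mid n) = 4 * 3 ^ n + mid n)%N).
  by rewrite tmassS1 ?mid_lt // tmassS4 ?mid_lt // exprS -IH /tmass_pair; lra.
by rewrite expnS; lia.
Qed.

Lemma tmass_mid_le n : tmass n (mid n) <= (5 / 16) ^+ n.
Proof. by rewrite -tmass_pair_mid /tmass_pair ler_wpDr ?tmass_ge0. Qed.

Lemma tmass_mid_ge n : (5 / 16) ^+ n / 16 <= tmass n.+1 (mid n.+1).
Proof.
by have := tmassS_ge_pair n 1 (mid n) isT (mid_lt n); rewrite mul1n tmass_pair_mid.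
Qed.

Lemma tmass_first n : tmass n 0%N = (1 / 16) ^+ n * tmass 0 0%N.
Proof.
elim: n => [|n IH]; first by rewrite expr0 mul1r.
by rewrite tmassS0 ?expn_gt0 // IH exprS; lra.
Qed.

Lemma tmass_last n : tmass n (2 * 3 ^ n - 1)%N = (1 / 16) ^+ n * tmass 0 1%N.
Proof.
elim: n => [|n IH]; first by rewrite expr0 mul1r.
have pow_gt0 : (0 < 3 ^ n)%N by rewrite expn_gt0.
rewrite (_ : (2 * 3 ^ n.+1 - 1 = 5 * 3 ^ n + (3 ^ n - 1))%N); last by rewrite expnS; lia.
rewrite tmassS5; last by lia.
by rewrite (_ : (3 ^ n + (3 ^ n - 1) = 2 * 3 ^ n - 1)%N) ?IH ?exprS; [lra | lia].
Qed.

Lemma tri_nat n (k : nat) :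
  tri n k = `[k%:R * tlen n, k%:R * tlen n + tlen n[%classic.
Proof. by rewrite /tri intrD -pmulrn mulrDl mul1r. Qed.

Lemma measurable_ball (x r : R) : measurable (ball x r).
Proof. by rewrite ball_itv; exact: measurable_itv. Qed.

Lemma tmass_le_ball n (k : nat) x :
  tri n k x -> tmass n k <= fine (mu (ball x (tlen n))).
Proof.
move=> x_in; apply: fine_mu_le; [exact: measurable_tri | exact: measurable_ball |].
move: x_in; rewrite tri_nat /= in_itv /= => /andP[? ?] y.
by rewrite ball_itv /= !in_itv /= => /andP[? ?]; apply/andP; split; lra.
Qed.

Lemma tri_mid n : tri n (mid n) = `[1 / 2 - tlen n / 2, 1 / 2 + tlen n / 2[%classic.
Proof.
have : (2 * mid n + 1)%:R * tlen n = 1 :> R by rewrite mid_eq natrX tlenK.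
rewrite natrD natrM tri_nat => mid_t.
have -> : (mid n)%:R * tlen n = 1 / 2 - tlen n / 2 :> R by lra.
by rewrite (_ : 1 / 2 - tlen n / 2 + tlen n = 1 / 2 + tlen n / 2 :> R) //; lra.
Qed.

Lemma tmass_mid_le_ball n (r : R) : tlen n / 2 < r ->
  tmass n (mid n) <= fine (mu (ball (1 / 2 : R) r)).
Proof.
move=> r_gt; have t_gt0 : 0 < tlen n :> R := tlen_gt0 _.
apply: fine_mu_le; [exact: measurable_tri | exact: measurable_ball |].
rewrite tri_mid => y /=.
by rewrite ball_itv /= !in_itv /= => /andP[? ?]; apply/andP; split; lra.
Qed.

Lemma ball_le_tmass_mid n (r : R) : r <= tlen n / 2 ->
  fine (mu (ball (1 / 2 : R) r)) <= tmass n (mid n).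
Proof.
move=> r_le; apply: fine_mu_le; [exact: measurable_ball | exact: measurable_tri |].
rewrite tri_mid => y; rewrite ball_itv /= !in_itv /= => /andP[? ?].
by apply/andP; split; lra.
Qed.

Lemma mass_ball_half n (r : R) : tlen n.+1 / 2 < r <= tlen n / 2 ->
  1 / 16 * (5 / 16) ^+ n <= fine (mu (ball (1 / 2 : R) r)) <= (5 / 16) ^+ n.
Proof.
move=> /andP[r_gt r_le]; rewrite mulrC mul1r.
apply/andP; split.
  exact: le_trans (tmass_mid_ge n) (tmass_mid_le_ball _ _ r_gt).
exact: le_trans (ball_le_tmass_mid _ _ r_le) (tmass_mid_le n).
Qed.

Lemma msupp_half : msupp mu (1 / 2 : R).
Proof.
move=> r r_gt0; have [n n_big] := exists_pow3_gt 1 (2 * r) ltac:(lra).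
have t_lt : tlen n.+1 / 2 < r.
  have pow_gt0 : 0 < 3 ^+ n :> R by exact: exprn_gt0.
  rewrite tlenS ltr_pdivrMr // -(ltr_pM2l pow_gt0) !mulrA tlenK; lra.
have pos : 0 < (5 / 16) ^+ n / 16 :> R by rewrite divr_gt0 // exprn_gt0.
rewrite -fine_muK ?lte_fin; last exact: measurable_ball.
exact: lt_le_trans pos (le_trans (tmass_mid_ge n) (tmass_mid_le_ball _ _ t_lt)).
Qed.

Lemma tri_last n : tri n (2 * 3 ^ n - 1)%N = `[2 - tlen n, 2[%classic.
Proof.
have pow_gt0 : (0 < 3 ^ n)%N by rewrite expn_gt0.
rewrite tri_nat natrB ?muln_gt0 // natrM natrX mulrBl -mulrA tlenK.
by rewrite mulr1 mul1r subrK.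
Qed.

Lemma mass_ball0 n :
  fine (mu (ball (0 : R) (tlen n))) = (1 / 16) ^+ n * tmass 0 0%N.
Proof.
have t_gt0 : 0 < tlen n :> R := tlen_gt0 _.
rewrite -tmass_first; apply/eqP; rewrite eq_le; apply/andP; split; last first.
  by apply: tmass_le_ball; rewrite tri_nat /= in_itv /= mul0r add0r lexx.
have := fine_mu_le_setU (ball (0 : R) (tlen n)) `]-oo, 0]%classic (tri n 0%N)
  (measurable_ball _ _) (measurable_itv _) (measurable_tri _ _).
rewrite mu_itv_le0 add0r; apply; rewrite tri_nat mul0r add0r => y.
by rewrite ball_itv /= !in_itv /= => /andP[? ?]; case: (lerP y 0); [left | right; lra].
Qed.

Lemma mass_ball2_le n :
  fine (mu (ball (2 : R) (tlen n))) <= (1 / 16) ^+ n * tmass 0 1%N.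
Proof.
have t_gt0 : 0 < tlen n :> R := tlen_gt0 _.
rewrite -tmass_last.
have := fine_mu_le_setU (ball (2 : R) (tlen n)) (tri n (2 * 3 ^ n - 1)%N)
  `[2, +oo[%classic (measurable_ball _ _) (measurable_tri _ _) (measurable_itv _).
rewrite mu_itv_ge2 addr0; apply; rewrite tri_last => y.
rewrite ball_itv /= !in_itv /= andbT => /andP[? ?].
by case: (ltrP y 2); [left; lra | right].
Qed.

Lemma mass_ball2_ge n :
  (1 / 16) ^+ n.+1 * tmass 0 1%N <= fine (mu (ball (2 : R) (tlen n))).
Proof.
have t_gt0 : 0 < tlen n.+1 :> R := tlen_gt0 _.
rewrite -tmass_last.
apply: fine_mu_le; [exact: measurable_tri | exact: measurable_ball |].
rewrite tri_last tlenS in t_gt0 * => y /=.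
by rewrite ball_itv /= !in_itv /= => /andP[? ?]; apply/andP; split; lra.
Qed.

Lemma tri_truncn n (x : R) : 0 <= x -> tri n (Num.truncn (x * 3 ^+ n)) x.
Proof.
move=> x0; have t_gt0 : 0 < tlen n :> R := tlen_gt0 _.
have /andP[k_le k_lt] := truncn_itv (mulr_ge0 x0 (exprn_ge0 n (ler0n R 3))).
have x_eq : x = x * 3 ^+ n * tlen n by rewrite -mulrA tlenK mulr1.
have lo := ler_wpM2r (ltW t_gt0) k_le.
have hi : x * 3 ^+ n * tlen n < ((Num.truncn (x * 3 ^+ n))%:R + 1) * tlen n.
  by rewrite ltr_pM2r // natr1.
by rewrite tri_nat /= in_itv /=; apply/andP; split; lra.
Qed.

Lemma mass_ball_interior (x : R) : 0 < x < 2 -> exists m, forall t,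
  (1 / 16) ^+ m * (5 / 16) ^+ t <= fine (mu (ball x (tlen (m + t)))).
Proof.
move=> /andP[x0 x2]; have min_gt0 : 0 < Num.min x (2 - x) by rewrite lt_min x0; lra.
(* 3^-m < min(x, 2 - x) keeps the level-(m+t) interval of x away from the 3^t
   outermost intervals at either end of [0, 2[. *)
have [m m_big] := exists_pow3_gt 1 (Num.min x (2 - x)) min_gt0.
exists m => t; set n := (m + t)%N; set k := Num.truncn (x * 3 ^+ n).
have x_in := tri_truncn n _ (ltW x0).
have /andP[k_le k_lt] := truncn_itv (mulr_ge0 (ltW x0) (exprn_ge0 n (ler0n R 3))).
have pow_t_gt0 : 0 < 3 ^+ t :> R by exact: exprn_gt0.
have far : 3 ^+ t < Num.min x (2 - x) * 3 ^+ n.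
  by rewrite /n exprD mulrCA -[X in X < _]mul1r mulrA ltr_pM2r.
have far_x : 3 ^+ t < x * 3 ^+ n.
  by apply: lt_le_trans far _; rewrite ler_pM2r ?exprn_gt0 // ge_min lexx.
have far_2 : 3 ^+ t < (2 - x) * 3 ^+ n.
  by apply: lt_le_trans far _; rewrite ler_pM2r ?exprn_gt0 // ge_min lexx orbT.
have k_ge : (3 ^ t <= k)%N.
  by rewrite -ltnS -(ltr_nat R) natrX; apply: lt_trans far_x k_lt.
have k_small : (k + 3 ^ t < 2 * 3 ^ n)%N.
  by rewrite -(ltr_nat R) natrD natrM !natrX; lra.
apply: le_trans (tmass_le_ball _ _ _ x_in); rewrite -/k.
case: (ltnP k (3 ^ n)) => [k_lo|k_hi].
  by apply: tmass_ge_interior_lo; rewrite k_ge k_lo.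
by rewrite -(subnKC k_hi); apply: tmass_ge_interior_hi; rewrite -/n; lia.
Qed.

Lemma locdim_half : has_locdim mu (1 / 2) (ln (16 / 5) / ln 3).
Proof.
have -> : ln (16 / 5 : R) = - ln (5 / 16) by rewrite -lnV ?posrE // invf_div.
apply: (has_locdim_of_sandwich mu _ _ (1 / 16) 1); rewrite ?divr_gt0 //.
by move=> n r /(mass_ball_half n r) mass_r; rewrite !mul1r in mass_r *.
Qed.

Let ln_sixteenth : - ln (1 / 16 : R) / ln 3 = 4 * ln 2 / ln 3.
Proof. by rewrite div1r lnV ?posrE // opprK ln16E. Qed.

Let mass_pos x r : msupp mu x -> 0 < r -> 0 < fine (mu (ball x r)).
Proof.
move=> x_supp /(x_supp r); rewrite -fine_muK ?lte_fin //; exact: measurable_ball.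
Qed.

Lemma locdim_at0 l : msupp mu 0 -> has_locdim mu 0 l -> l = 4 * ln 2 / ln 3.
Proof.
move=> supp0 l_dim; have := mass_pos 0 (tlen 0) supp0 (tlen_gt0 0).
rewrite mass_ball0 expr0 mul1r => pos0.
apply/eqP; rewrite -ln_sixteenth eq_le; apply/andP; split.
  apply: (has_locdim_le mu 0 l (tmass 0 0%N) _ 0%N) => // n _.
  by rewrite mass_ball0 mulrC.
apply: (has_locdim_ge mu 0 l (tmass 0 0%N) _ 0%N) => // n _.
by rewrite mass_ball0 mulrC lexx andbT mulr_gt0 // exprn_gt0.
Qed.

Lemma locdim_at2 l : msupp mu 2 -> has_locdim mu 2 l -> l = 4 * ln 2 / ln 3.
Proof.
move=> supp2 l_dim; have := mass_pos 2 (tlen 0) supp2 (tlen_gt0 0).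
move=> /lt_le_trans /(_ (mass_ball2_le 0)); rewrite expr0 mul1r => pos1.
apply/eqP; rewrite -ln_sixteenth eq_le; apply/andP; split.
  apply: (has_locdim_le mu 2 l (tmass 0 1%N / 16) _ 0%N) => // [|n _].
    exact: divr_gt0.
  by apply: le_trans (mass_ball2_ge n); rewrite exprSr; lra.
apply: (has_locdim_ge mu 2 l (tmass 0 1%N) _ 0%N) => // n _.
rewrite mulrC mass_ball2_le andbT; apply: lt_le_trans (mass_ball2_ge n).
by rewrite mulr_gt0 // exprn_gt0.
Qed.

Lemma locdim_interior_le x l : 0 < x < 2 -> has_locdim mu x l ->
  l <= ln (16 / 5) / ln 3.
Proof.
move=> x_in l_dim; have [m mass_ge] := mass_ball_interior x x_in.
have -> : ln (16 / 5 : R) = - ln (5 / 16) by rewrite -lnV ?posrE // invf_div.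
apply: (has_locdim_le mu x l ((1 / 5) ^+ m) _ m) => // n mn.
have := mass_ge (n - m)%N; rewrite subnKC //; apply: le_trans.
rewrite -{1}(subnKC mn) exprD mulrA -exprMn; apply: ler_wpM2r; first exact: exprn_ge0.
by rewrite (_ : 1 / 5 * (5 / 16) = 1 / 16 :> R) //; lra.
Qed.

Lemma locdim_le x l : msupp mu x -> has_locdim mu x l -> l != 4 * ln 2 / ln 3 ->
  l <= ln (16 / 5) / ln 3.
Proof.
move=> x_supp l_dim l_neq; have /andP[x_ge0 x_le2] := msupp_itv x x_supp.
case: (eqVneq x 0) => [x0|x_neq0].
  by move: l_neq; rewrite (locdim_at0 l) -?x0 ?eqxx.
case: (eqVneq x 2) => [x2|x_neq2].
  by move: l_neq; rewrite (locdim_at2 l) -?x2 ?eqxx.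
by apply: (locdim_interior_le x); rewrite // !lt_neqAle eq_sym x_neq0 x_ge0 x_neq2.
Qed.

End ConvolvedCantorMeasure.

Theorem lemma20 (R : realType) (mu : {measure set R -> \bar R}) :
  self_similar_measure 3 4 (fun i => ('C(4, i))%:R / 16) mu ->
  sup (locdim_set mu `\ (4 * ln 2 / ln 3)) = ln (16 / 5) / ln 3 /\
  msupp mu (1 / 2) /\ has_locdim mu (1 / 2) (ln (16 / 5) / ln 3).
Proof.
move=> mu_ss; set dims := locdim_set mu `\ _.
have ln_lt : ln (16 / 5) / ln 3 < 4 * ln 2 / ln 3 :> R.
  have ln3_gt0 : 0 < ln (3 : R) by apply: ln_gt0; lra.
  by rewrite ltr_pM2r ?invr_gt0 // -ln16E ltr_ln ?posrE; lra.
have in_dims : dims (ln (16 / 5) / ln 3).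
  split; first by exists (1 / 2); [exact: msupp_half | exact: locdim_half].
  by move=> /= eq_l; move: ln_lt; rewrite eq_l ltxx.
have ub : ubound dims (ln (16 / 5) / ln 3).
  move=> l [[x x_supp l_dim] /eqP l_neq]; exact: locdim_le l_dim l_neq.
split; last by split; [exact: msupp_half | exact: locdim_half].
apply/eqP; rewrite eq_le; apply/andP; split.
  by apply: ge_sup ub; exists (ln (16 / 5) / ln 3).
by apply: sup_upper_bound => //; split; exists (ln (16 / 5) / ln 3).
Qed.
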